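(* Let $N\ge1$, let real channel gains $a_{s,r},a_{s,j},a_{r,j}$ ($j=1,\dots,N$) be fixed, and for $\mathbf{P}=(P_s,P_r)\in[0,\infty)^2$ set $\mathsf{SNR}_{s,r}=a_{s,r}^2P_s$, $\mathsf{SNR}_{s,j}=a_{s,j}^2P_s$, $\mathsf{SNR}_{r,j}=a_{r,j}^2P_r$, and $\mathbf{S}(\mathbf{P})=(\mathsf{SNR}_{s,r},\mathsf{SNR}_{s,1},\dots,\mathsf{SNR}_{s,N},\mathsf{SNR}_{r,1},\dots,\mathsf{SNR}_{r,N})$. With $\mathsf{C}(x)=\tfrac12\log(1+x)$, $f_j(\rho,\mathbf{S})=\mathsf{SNR}_{s,j}+\mathsf{SNR}_{r,j}+2\rho\sqrt{\mathsf{SNR}_{s,j}\mathsf{SNR}_{r,j}}$, $g^*_j(\rho,\mathbf{S})=(1-\rho^2)\mathsf{SNR}_{s,r}$ and $R_{DF}(\rho,\mathbf{S})=\min_{1\le j\le N}\min(\mathsf{C}(f_j(\rho,\mathbf{S})),\mathsf{C}(g^*_j(\rho,\mathbf{S})))$, the map $(t,\mathbf{P})\mapsto R_{DF}(\sqrt t,\mathbf{S}(\mathbf{P}))$ is quasi-concave on $[0,1]\times[0,\infty)^2$ (i.e., quasi-concave in $(\rho^2,\mathbf{P})$).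
   Context: Setting: real AWGN multicast relay channel with source $s$, relay $r$ and destinations $1,\dots,N$; $\rho\in[0,1]$ is the source–relay input correlation coefficient. A function $F$ on a convex set is quasi-concave if $F(\lambda x_1+(1-\lambda)x_2)\ge\min(F(x_1),F(x_2))$ for all $x_1,x_2$ and $\lambda\in[0,1]$. *)

From Stdlib Require Import Reals Lra.
Open Scope R_scope.

(* Gaussian capacity C(x) = 1/2 log(1+x) (natural log; base is irrelevant up to a positive factor). *)
Definition Ccap (x : R) : R := / 2 * ln (1 + x).

Fixpoint min_upto (F : nat -> R) (n : nat) : R :=
  match n with
  | O => F O
  | S m => Rmin (min_upto F m) (F (S m))
  end.

Definition min_1_to (N : nat) (F : nat -> R) : R := min_upto (fun k => F (S k)) (N - 1).

(* SNR vector S = (snr_sr, snr_s 1..N, snr_r 1..N), destinations indexed 1..N *)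
Definition f_j (rho snr_sj snr_rj : R) : R :=
  snr_sj + snr_rj + 2 * rho * sqrt (snr_sj * snr_rj).

Definition gstar_j (rho snr_sr : R) : R := (1 - rho ^ 2) * snr_sr.

Definition R_DF (N : nat) (rho snr_sr : R) (snr_s snr_r : nat -> R) : R :=
  min_1_to N (fun j => Rmin (Ccap (f_j rho (snr_s j) (snr_r j)))
                              (Ccap (gstar_j rho snr_sr))).

Definition F_DF (N : nat) (a_sr : R) (a_s a_r : nat -> R) (t Ps Pr : R) : R :=
  R_DF N (sqrt t) (a_sr ^ 2 * Ps) (fun j => a_s j ^ 2 * Ps) (fun j => a_r j ^ 2 * Pr).

Definition in_dom (t Ps Pr : R) : Prop := 0 <= t <= 1 /\ 0 <= Ps /\ 0 <= Pr.

Definition quasi_concave3 (F : R -> R -> R -> R) : Prop :=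
  forall t1 p1 q1 t2 p2 q2 lam,
    in_dom t1 p1 q1 -> in_dom t2 p2 q2 -> 0 <= lam <= 1 ->
    Rmin (F t1 p1 q1) (F t2 p2 q2) <=
      F (lam * t1 + (1 - lam) * t2) (lam * p1 + (1 - lam) * p2) (lam * q1 + (1 - lam) * q2).

(** The minimum of quasi-concave functions is quasi-concave and [Ccap] is
    increasing, so it suffices that both arguments of [Ccap] are quasi-concave
    in [(t, Ps, Pr)].  The relay term [(1 - t) * a_sr^2 * Ps] is a product of
    two nonnegative affine functions.  For the broadcast term
    [h(t, x, y) = x + y + 2 sqrt (t x y)] (after scaling [x], [y] by the
    gains), the superlevel set [{h >= a + b + d}] with [d > 0] is
    [{t >= phi(x, y)}] for [phi(x, y) = (a + b + d - x - y)^2 / (4 x y)]; the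
    whole set lies above the tangent plane of [phi] at [(a, b)], which is a
    polynomial inequality, and averaging this tangent bound over two points
    whose mean is [(a, b)] gives [h >= a + b + d] at the mean. *)
From Stdlib Require Import Reals Lra.
Open Scope R_scope.

Lemma sqr_le_le p q : 0 <= p -> q ^ 2 <= p ^ 2 -> q <= p.
Proof. intros Hp Hsq. destruct (Rle_dec q p); nra. Qed.

Lemma sqr_two_sqrt_mul t z : 0 <= t -> 0 <= z ->
  (2 * sqrt t * sqrt z) ^ 2 = 4 * t * z.
Proof.
  intros Ht Hz.
  replace ((2 * sqrt t * sqrt z) ^ 2) with (4 * sqrt t ^ 2 * sqrt z ^ 2) by ring.
  now rewrite !pow2_sqrt.
Qed.

Lemma cubic_margin_ge0 X Y : 0 <= X -> 0 <= Y -> 0 <= 1 - 3 * X * Y + X * Y * (X + Y).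
Proof.
  intros HX HY.
  set (r := sqrt (X * Y)).
  assert (Hr : 0 <= r) by apply sqrt_pos.
  assert (Hr2 : r * r = X * Y) by (apply sqrt_sqrt; nra).
  assert (Hsum : 2 * r <= X + Y).
  { apply sqr_le_le; [lra |]. assert (0 <= (X - Y) ^ 2) by apply pow2_ge_0. nra. }
  (* with [XY = r^2] and [X + Y >= 2 r] the margin is at least [(1 - r)^2 (1 + 2 r)] *)
  assert (0 <= (1 - r) ^ 2 * (1 + 2 * r)) by (apply Rmult_le_pos; [apply pow2_ge_0 | lra]).
  assert (r * r * (2 * r) <= X * Y * (X + Y)) by (rewrite <- Hr2; apply Rmult_le_compat_l; nra).
  rewrite <- Hr2. nra.
Qed.

Lemma normalized_tangent_ineq X Y a b d : 0 <= X -> 0 <= Y -> 0 < a -> 0 < b -> 0 < d ->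
  d * X * Y * (3 * d + 2 * a + 2 * b - (d + 2 * a) * X - (d + 2 * b) * Y)
    <= (a + b + d - a * X - b * Y) ^ 2.
Proof.
  intros HX HY Ha Hb Hd.
  set (s := a * (1 - X) + b * (1 - Y)).
  set (Q := 1 - 3 * X * Y + X * Y * (X + Y)).
  assert (HQ : 0 <= Q) by now apply cubic_margin_ge0.
  assert (Hgap : (a + b + d - a * X - b * Y) ^ 2
      - d * X * Y * (3 * d + 2 * a + 2 * b - (d + 2 * a) * X - (d + 2 * b) * Y)
      = s ^ 2 + 2 * d * s * (1 - X * Y) + d ^ 2 * Q) by (unfold s, Q; ring).
  destruct (Rle_dec ((1 - X) * (1 - Y)) 0) as [Hopp | Hsame].
  - (* completing the square in [s] leaves [- d^2 X Y (1 - X) (1 - Y)] *)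
    assert (Hsq : s ^ 2 + 2 * d * s * (1 - X * Y) + d ^ 2 * Q
      = (s + d * (1 - X * Y)) ^ 2 - d ^ 2 * (X * Y) * ((1 - X) * (1 - Y))) by (unfold Q; ring).
    assert (0 <= (s + d * (1 - X * Y)) ^ 2) by apply pow2_ge_0.
    assert (0 <= d ^ 2 * (X * Y) * - ((1 - X) * (1 - Y))).
    { apply Rmult_le_pos; [apply Rmult_le_pos; [apply pow2_ge_0 | nra] | lra]. }
    lra.
  - (* [X] and [Y] lie on the same side of [1], so [s] and [1 - X Y] have the same sign *)
    assert (Hcross : 0 <= s * (1 - X * Y)).
    { destruct (Rle_dec X 1).
      - assert (Y <= 1) by nra. apply Rmult_le_pos; unfold s; nra.
      - assert (1 <= Y) by nra. assert (s <= 0) by (unfold s; nra).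
        assert (1 <= X * Y) by nra. nra. }
    assert (0 <= s ^ 2) by apply pow2_ge_0.
    assert (0 <= d ^ 2 * Q) by (apply Rmult_le_pos; [apply pow2_ge_0 | lra]).
    assert (0 <= d * (s * (1 - X * Y))) by (apply Rmult_le_pos; lra).
    nra.
Qed.

(* [d / (4 a^2 b^2)] times this is the tangent plane at [(a, b)] of
   [phi(x, y) = (a + b + d - x - y)^2 / (4 x y)], which takes the value
   [d^2 / (4 a b)] there. *)
Definition tangent_lin (a b d x y : R) : R :=
  a * b * (3 * d + 2 * a + 2 * b) - b * (d + 2 * a) * x - a * (d + 2 * b) * y.

Lemma tangent_lin_convex_comb a b d l x1 y1 x2 y2 :
  l * tangent_lin a b d x1 y1 + (1 - l) * tangent_lin a b d x2 y2
    = tangent_lin a b d (l * x1 + (1 - l) * x2) (l * y1 + (1 - l) * y2).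
Proof. unfold tangent_lin. ring. Qed.

Lemma tangent_lin_center a b d : tangent_lin a b d a b = a * b * d.
Proof. unfold tangent_lin. ring. Qed.

Lemma tangent_lin_le0 a b d x y : 0 < a -> 0 < b -> 0 < d -> 0 <= x -> 0 <= y ->
  a + b + d <= x + y -> tangent_lin a b d x y <= 0.
Proof.
  intros Ha Hb Hd Hx Hy Hc. unfold tangent_lin.
  set (c := a + b + d). set (K := a * b * (3 * d + 2 * a + 2 * b)).
  (* the affine map equals [- b d (b + d)] at [(c, 0)] and [- a d (a + d)] at [(0, c)] *)
  assert (E : c * (K - b * (d + 2 * a) * x - a * (d + 2 * b) * y)
    = - (x * (b * d * (b + d)) + y * (a * d * (a + d)) + K * (x + y - c)))
    by (unfold c, K; ring).
  assert (0 <= x * (b * d * (b + d))) by (repeat apply Rmult_le_pos; lra).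
  assert (0 <= y * (a * d * (a + d))) by (repeat apply Rmult_le_pos; lra).
  assert (0 <= K) by (unfold K; repeat apply Rmult_le_pos; lra).
  assert (0 <= K * (x + y - c)) by (apply Rmult_le_pos; unfold c; lra).
  assert (0 < c) by (unfold c; lra).
  apply (Rmult_le_reg_l c); [assumption |].
  rewrite Rmult_0_r, E. lra.
Qed.

Lemma tangent_ineq a b d x y : 0 < a -> 0 < b -> 0 < d -> 0 <= x -> 0 <= y ->
  d * x * y * tangent_lin a b d x y <= a ^ 2 * b ^ 2 * (a + b + d - x - y) ^ 2.
Proof.
  intros Ha Hb Hd Hx Hy. unfold tangent_lin.
  set (X := x / a). set (Y := y / b).
  assert (Ex : x = a * X) by (unfold X; field; lra).
  assert (Ey : y = b * Y) by (unfold Y; field; lra).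
  assert (HX : 0 <= X) by nra. assert (HY : 0 <= Y) by nra.
  assert (Hn := normalized_tangent_ineq X Y a b d HX HY Ha Hb Hd).
  assert (0 <= a ^ 2 * b ^ 2) by (apply Rmult_le_pos; apply pow2_ge_0).
  rewrite Ex, Ey.
  replace (d * (a * X) * (b * Y) * (a * b * (3 * d + 2 * a + 2 * b)
      - b * (d + 2 * a) * (a * X) - a * (d + 2 * b) * (b * Y)))
    with (a ^ 2 * b ^ 2 * (d * X * Y * (3 * d + 2 * a + 2 * b - (d + 2 * a) * X - (d + 2 * b) * Y)))
    by ring.
  now apply Rmult_le_compat_l.
Qed.

Lemma superlevel_above_tangent a b d t x y :
  0 < a -> 0 < b -> 0 < d -> 0 <= t -> 0 <= x -> 0 <= y ->
  a + b + d <= f_j (sqrt t) x y -> d * tangent_lin a b d x y <= 4 * a ^ 2 * b ^ 2 * t.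
Proof.
  intros Ha Hb Hd Ht Hx Hy Hlev. unfold f_j in Hlev.
  assert (Hab : 0 <= a ^ 2 * b ^ 2) by (apply Rmult_le_pos; apply pow2_ge_0).
  destruct (Rle_dec (a + b + d) (x + y)) as [Hbeyond | Hbelow].
  { assert (tangent_lin a b d x y <= 0) by now apply tangent_lin_le0.
    nra. }
  set (D := a + b + d - x - y).
  assert (HD : D <= 2 * sqrt t * sqrt (x * y)) by (unfold D; lra).
  assert (Hxy0 : 0 <= x * y) by now apply Rmult_le_pos.
  assert (HD2 : D ^ 2 <= 4 * t * (x * y)).
  { rewrite <- (sqr_two_sqrt_mul t (x * y)) by assumption.
    apply pow_incr. unfold D. lra. }
  assert (Hxy : 0 < x * y).
  { destruct (Req_dec (x * y) 0) as [E | E]; [| lra].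
    rewrite E, sqrt_0 in HD. unfold D in HD. lra. }
  assert (HT := tangent_ineq a b d x y Ha Hb Hd Hx Hy). fold D in HT.
  apply (Rmult_le_reg_r (x * y)); [assumption |].
  nra.
Qed.

Lemma f_j_sqrt_ge t x y : 0 <= x -> 0 <= y -> x + y <= f_j (sqrt t) x y.
Proof.
  intros Hx Hy. unfold f_j.
  assert (0 <= sqrt t * sqrt (x * y)) by (apply Rmult_le_pos; apply sqrt_pos).
  lra.
Qed.

Lemma f_j_sqrt_0_l t y : f_j (sqrt t) 0 y = y.
Proof. unfold f_j. rewrite Rmult_0_l, sqrt_0. ring. Qed.

Lemma f_j_sqrt_0_r t x : f_j (sqrt t) x 0 = x.
Proof. unfold f_j. rewrite Rmult_0_r, sqrt_0. ring. Qed.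

Lemma f_j_sqrt_superlevel_mean a b d t1 x1 y1 t2 x2 y2 l :
  0 < a -> 0 < b -> 0 < d ->
  0 <= t1 -> 0 <= x1 -> 0 <= y1 -> 0 <= t2 -> 0 <= x2 -> 0 <= y2 -> 0 <= l <= 1 ->
  l * x1 + (1 - l) * x2 = a -> l * y1 + (1 - l) * y2 = b ->
  a + b + d <= f_j (sqrt t1) x1 y1 -> a + b + d <= f_j (sqrt t2) x2 y2 ->
  a + b + d <= f_j (sqrt (l * t1 + (1 - l) * t2)) a b.
Proof.
  intros Ha Hb Hd Ht1 Hx1 Hy1 Ht2 Hx2 Hy2 Hl Ea Eb Hlev1 Hlev2.
  set (tm := l * t1 + (1 - l) * t2).
  assert (Htm : 0 <= tm) by (unfold tm; nra).
  assert (T1 := superlevel_above_tangent a b d t1 x1 y1 Ha Hb Hd Ht1 Hx1 Hy1 Hlev1).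
  assert (T2 := superlevel_above_tangent a b d t2 x2 y2 Ha Hb Hd Ht2 Hx2 Hy2 Hlev2).
  assert (Havg : d * (a * b * d) <= 4 * a ^ 2 * b ^ 2 * tm).
  { assert (Ecomb := tangent_lin_convex_comb a b d l x1 y1 x2 y2).
    rewrite Ea, Eb, tangent_lin_center in Ecomb.
    rewrite <- Ecomb. unfold tm.
    assert (l * (d * tangent_lin a b d x1 y1) <= l * (4 * a ^ 2 * b ^ 2 * t1))
      by (apply Rmult_le_compat_l; lra).
    assert ((1 - l) * (d * tangent_lin a b d x2 y2) <= (1 - l) * (4 * a ^ 2 * b ^ 2 * t2))
      by (apply Rmult_le_compat_l; lra).
    lra. }
  assert (Hd2 : d ^ 2 <= (2 * sqrt tm * sqrt (a * b)) ^ 2).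
  { rewrite sqr_two_sqrt_mul by nra.
    apply (Rmult_le_reg_l (a * b)); nra. }
  assert (0 <= sqrt tm * sqrt (a * b)) by (apply Rmult_le_pos; apply sqrt_pos).
  assert (d <= 2 * sqrt tm * sqrt (a * b)) by (apply sqr_le_le; [lra | assumption]).
  unfold f_j. lra.
Qed.

Lemma f_j_sqrt_quasi_concave t1 x1 y1 t2 x2 y2 l :
  0 <= t1 -> 0 <= x1 -> 0 <= y1 -> 0 <= t2 -> 0 <= x2 -> 0 <= y2 -> 0 <= l <= 1 ->
  Rmin (f_j (sqrt t1) x1 y1) (f_j (sqrt t2) x2 y2)
    <= f_j (sqrt (l * t1 + (1 - l) * t2)) (l * x1 + (1 - l) * x2) (l * y1 + (1 - l) * y2).
Proof.
  intros Ht1 Hx1 Hy1 Ht2 Hx2 Hy2 Hl.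
  assert (Hc1 := Rmin_l (f_j (sqrt t1) x1 y1) (f_j (sqrt t2) x2 y2)).
  assert (Hc2 := Rmin_r (f_j (sqrt t1) x1 y1) (f_j (sqrt t2) x2 y2)).
  set (c := Rmin _ _) in *.
  destruct (Req_dec l 0) as [-> | Hl0].
  { now rewrite !Rmult_0_l, !Rminus_0_r, !Rmult_1_l, !Rplus_0_l. }
  destruct (Req_dec l 1) as [-> | Hl1].
  { now rewrite !Rmult_1_l, Rminus_diag, !Rmult_0_l, !Rplus_0_r. }
  set (a := l * x1 + (1 - l) * x2). set (b := l * y1 + (1 - l) * y2).
  destruct (Rle_dec c (a + b)) as [Hlow | Hhigh].
  { assert (a + b <= f_j (sqrt (l * t1 + (1 - l) * t2)) a b)
      by (apply f_j_sqrt_ge; unfold a, b; nra).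
    lra. }
  assert (Ha : 0 < a).
  { destruct (Req_dec a 0) as [Ea | Ea]; [| unfold a in *; nra].
    assert (x1 = 0) by (unfold a in Ea; nra). assert (x2 = 0) by (unfold a in Ea; nra).
    subst x1 x2. rewrite f_j_sqrt_0_l in Hc1, Hc2. unfold a, b in Hhigh. nra. }
  assert (Hb : 0 < b).
  { destruct (Req_dec b 0) as [Eb | Eb]; [| unfold b in *; nra].
    assert (y1 = 0) by (unfold b in Eb; nra). assert (y2 = 0) by (unfold b in Eb; nra).
    subst y1 y2. rewrite f_j_sqrt_0_r in Hc1, Hc2. unfold a, b in Hhigh. nra. }
  replace c with (a + b + (c - a - b)) by ring.
  apply f_j_sqrt_superlevel_mean with x1 y1 x2 y2; try reflexivity; lra.
Qed.

Lemma mul_quasi_concave u1 v1 u2 v2 l :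
  0 <= u1 -> 0 <= v1 -> 0 <= u2 -> 0 <= v2 -> 0 <= l <= 1 ->
  Rmin (u1 * v1) (u2 * v2) <= (l * u1 + (1 - l) * u2) * (l * v1 + (1 - l) * v2).
Proof.
  intros Hu1 Hv1 Hu2 Hv2 Hl.
  assert (Hm1 := Rmin_l (u1 * v1) (u2 * v2)). assert (Hm2 := Rmin_r (u1 * v1) (u2 * v2)).
  set (m := Rmin _ _) in *.
  assert (Hm0 : 0 <= m) by (apply Rmin_glb; now apply Rmult_le_pos).
  (* AM-GM on the cross terms: [u1 v2 + u2 v1 >= 2 sqrt (u1 v1 u2 v2) >= 2 m] *)
  assert (Hcross : 2 * m <= u1 * v2 + u2 * v1).
  { assert (m * m <= (u1 * v1) * (u2 * v2)) by now apply Rmult_le_compat.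
    assert (0 <= u1 * v2) by now apply Rmult_le_pos.
    assert (0 <= u2 * v1) by now apply Rmult_le_pos.
    apply sqr_le_le; [lra |].
    assert (0 <= (u1 * v2 - u2 * v1) ^ 2) by apply pow2_ge_0. nra. }
  replace ((l * u1 + (1 - l) * u2) * (l * v1 + (1 - l) * v2)) with
    (l * l * (u1 * v1) + (1 - l) * (1 - l) * (u2 * v2) + l * (1 - l) * (u1 * v2 + u2 * v1))
    by ring.
  assert (l * l * m <= l * l * (u1 * v1)) by (apply Rmult_le_compat_l; nra).
  assert ((1 - l) * (1 - l) * m <= (1 - l) * (1 - l) * (u2 * v2)) by (apply Rmult_le_compat_l; nra).
  assert (l * (1 - l) * (2 * m) <= l * (1 - l) * (u1 * v2 + u2 * v1)) by (apply Rmult_le_compat_l; nra).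
  nra.
Qed.

Lemma Ccap_le x y : 0 <= x -> x <= y -> Ccap x <= Ccap y.
Proof.
  intros Hx Hxy. unfold Ccap. apply Rmult_le_compat_l; [lra |].
  destruct (Req_dec x y) as [-> | Hne]; [lra |].
  left. apply ln_increasing; lra.
Qed.

Lemma Rmin_Ccap_le A1 A2 B : 0 <= A1 -> 0 <= A2 -> Rmin A1 A2 <= B ->
  Rmin (Ccap A1) (Ccap A2) <= Ccap B.
Proof.
  intros H1 H2 HB.
  apply Rle_trans with (Ccap (Rmin A1 A2)).
  - pattern (Rmin A1 A2). apply Rmin_case; [apply Rmin_l | apply Rmin_r].
  - apply Ccap_le; [now apply Rmin_glb | assumption].
Qed.

Lemma Rmin_Rmin_le p1 p2 p q1 q2 q : Rmin p1 p2 <= p -> Rmin q1 q2 <= q ->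
  Rmin (Rmin p1 q1) (Rmin p2 q2) <= Rmin p q.
Proof. unfold Rmin. intros; repeat destruct Rle_dec; lra. Qed.

Lemma min_upto_quasi_concave F1 F2 F n : (forall k, Rmin (F1 k) (F2 k) <= F k) ->
  Rmin (min_upto F1 n) (min_upto F2 n) <= min_upto F n.
Proof.
  intros H. induction n as [| n IH]; simpl; [apply H |].
  now apply Rmin_Rmin_le.
Qed.

Lemma f_j_snr_quasi_concave (g_s g_r : R) t1 p1 q1 t2 p2 q2 l :
  in_dom t1 p1 q1 -> in_dom t2 p2 q2 -> 0 <= l <= 1 ->
  Rmin (Ccap (f_j (sqrt t1) (g_s ^ 2 * p1) (g_r ^ 2 * q1)))
       (Ccap (f_j (sqrt t2) (g_s ^ 2 * p2) (g_r ^ 2 * q2)))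
  <= Ccap (f_j (sqrt (l * t1 + (1 - l) * t2))
             (g_s ^ 2 * (l * p1 + (1 - l) * p2)) (g_r ^ 2 * (l * q1 + (1 - l) * q2))).
Proof.
  intros [Ht1 [Hp1 Hq1]] [Ht2 [Hp2 Hq2]] Hl.
  assert (Hs := pow2_ge_0 g_s). assert (Hr := pow2_ge_0 g_r).
  assert (Hf : forall t p q, 0 <= p -> 0 <= q -> 0 <= f_j (sqrt t) (g_s ^ 2 * p) (g_r ^ 2 * q)).
  { intros t p q Hp Hq.
    assert (H := f_j_sqrt_ge t (g_s ^ 2 * p) (g_r ^ 2 * q)). nra. }
  apply Rmin_Ccap_le; [now apply Hf | now apply Hf |].
  replace (g_s ^ 2 * (l * p1 + (1 - l) * p2)) with (l * (g_s ^ 2 * p1) + (1 - l) * (g_s ^ 2 * p2))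
    by ring.
  replace (g_r ^ 2 * (l * q1 + (1 - l) * q2)) with (l * (g_r ^ 2 * q1) + (1 - l) * (g_r ^ 2 * q2))
    by ring.
  apply f_j_sqrt_quasi_concave; try lra; now apply Rmult_le_pos.
Qed.

Lemma gstar_j_snr_quasi_concave (g : R) t1 p1 t2 p2 l :
  0 <= t1 <= 1 -> 0 <= p1 -> 0 <= t2 <= 1 -> 0 <= p2 -> 0 <= l <= 1 ->
  Rmin (Ccap (gstar_j (sqrt t1) (g ^ 2 * p1))) (Ccap (gstar_j (sqrt t2) (g ^ 2 * p2)))
  <= Ccap (gstar_j (sqrt (l * t1 + (1 - l) * t2)) (g ^ 2 * (l * p1 + (1 - l) * p2))).
Proof.
  intros Ht1 Hp1 Ht2 Hp2 Hl.
  assert (Hg := pow2_ge_0 g).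
  assert (Hdb : forall t p, t <= 1 -> 0 <= p -> 0 <= (1 - t) * (g ^ 2 * p))
    by (intros; apply Rmult_le_pos; [lra | now apply Rmult_le_pos]).
  unfold gstar_j. rewrite !pow2_sqrt by nra.
  apply Rmin_Ccap_le; [now apply Hdb | now apply Hdb |].
  replace (1 - (l * t1 + (1 - l) * t2)) with (l * (1 - t1) + (1 - l) * (1 - t2)) by ring.
  replace (g ^ 2 * (l * p1 + (1 - l) * p2)) with (l * (g ^ 2 * p1) + (1 - l) * (g ^ 2 * p2))
    by ring.
  apply mul_quasi_concave; try lra; now apply Rmult_le_pos.
Qed.

Theorem corollary2 (N : nat) (a_sr : R) (a_s a_r : nat -> R) :
  (1 <= N)%nat -> quasi_concave3 (F_DF N a_sr a_s a_r).
Proof.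
  intros _ t1 p1 q1 t2 p2 q2 l Hdom1 Hdom2 Hl.
  unfold F_DF, R_DF, min_1_to.
  apply min_upto_quasi_concave. intro k.
  apply Rmin_Rmin_le.
  - now apply f_j_snr_quasi_concave.
  - destruct Hdom1 as [Ht1 [Hp1 _]], Hdom2 as [Ht2 [Hp2 _]].
    now apply gstar_j_snr_quasi_concave.
Qed.
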